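(* Let $k$ be a field of characteristic $\neq2$, $f\in k[X]$ separable of degree $6$ with roots $\Omega\subset\bar k$, $\bar A=\bar k[X]/(f)$, and $\delta\in\bar A^*$. Let $\Lambda$ be the set of the $32$ lines $L_\varepsilon$, for $\varepsilon\in\bar A$ with $\varepsilon^2=\delta$, where $L_\varepsilon$ corresponds to the subspace $\{\varepsilon^{-1}(sX+t):s,t\in\bar k\}$ of $\bar A$; note $L_\varepsilon=L_{-\varepsilon}$. Let $L,L'\in\Lambda$ be different lines of the same parity. Then $L$ and $L'$ do not intersect, and there are exactly two lines $M,M'\in\Lambda$ of the opposite parity that intersect both $L$ and $L'$. Moreover there are $\omega,\psi\in\Omega$ such that $\{L,L',M,M'\}$ is an orbit of $\Lambda$ under the group $\Phi_{\omega\psi}$.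
   Context: For $I\subseteq\Omega$ let $\mu_I\in\bar A$ be the element with $\varphi_\theta(\mu_I)=-1$ for $\theta\in I$ and $=1$ otherwise, where $\varphi_\theta$ is evaluation at $X=\theta$. Write $\mu_\omega=\mu_{\{\omega\}}$. Multiplication by $\mu_I$ maps $L_\varepsilon$ to $L_{\varepsilon\mu_I^{-1}}$. Since $\mu_{\Omega\setminus I}=-\mu_I$, it acts on $\Lambda$ simply transitively modulo $\pm1$. Two lines $L,L'\in\Lambda$ have the same parity if for the subset $I$ with $\mu_IL=L'$ the cardinality $\#I$ is even; this is independent of replacing $I$ by $\Omega\setminus I$. Otherwise they have opposite parity. $\Phi_{\omega\psi}$ is the group of automorphisms generated by multiplication by $\mu_\omega$ and $\mu_\psi$. *)

From HB Require Import structures.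
From mathcomp Require Import all_boot all_order all_algebra all_field.
Set Implicit Arguments. Unset Strict Implicit. Unset Printing Implicit Defensive.
Import GRing.Theory.
Local Open Scope ring_scope.

(* Abar = K[X]/(F) is represented by polynomials in {poly K}, two of them
   denoting the same element of Abar iff F divides their difference.
   A subset of Abar is a predicate on {poly K} (compatible with ~ mod F). *)
Section Defs.
Variables (K : fieldType) (F : {poly K}).

(* the 2-dim subspace eps^{-1}{sX+t} of Abar: v such that eps*v = sX+t in Abar *)
Definition line_of (eps : {poly K}) : {poly K} -> Prop :=
  fun v => exists s t : K, F %| eps * v - (s *: 'X + t%:P).

Definition inLambda (delta : {poly K}) (L : {poly K} -> Prop) : Prop :=
  exists eps, F %| eps ^+ 2 - delta /\ forall v, L v <-> line_of eps v.

Definition same_line (L L' : {poly K} -> Prop) : Prop := forall v, L v <-> L' v.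

(* the projective lines meet: the subspaces share a nonzero element of Abar *)
Definition intersect (L L' : {poly K} -> Prop) : Prop :=
  exists v, ~~ (F %| v) /\ L v /\ L' v.

Definition mul_line (m : {poly K}) (L : {poly K} -> Prop) : {poly K} -> Prop :=
  fun w => exists v, L v /\ F %| w - m * v.

Definition is_mu (I : seq K) (m : {poly K}) : Prop :=
  forall theta, root F theta -> m.[theta] = if theta \in I then -1 else 1.

Definition same_parity (L L' : {poly K} -> Prop) : Prop :=
  exists (I : seq K) (m : {poly K}),
    [/\ uniq I, all (root F) I, ~~ odd (size I), is_mu I m &
        same_line (mul_line m L) L'].

Definition opp_parity (L L' : {poly K} -> Prop) : Prop := ~ same_parity L L'.

(* N lies in the orbit of L under Phi_{omega psi}, the group generated by
   multiplication by mu_omega and mu_psi *)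
Definition in_orbit_Phi (omega psi : K) (L N : {poly K} -> Prop) : Prop :=
  exists (a b : nat) (mo mp : {poly K}),
    [/\ is_mu [:: omega] mo, is_mu [:: psi] mp &
        same_line (mul_line (mo ^+ a * mp ^+ b) L) N].
End Defs.

From HB Require Import structures.
From mathcomp Require Import all_boot all_order all_algebra all_field.
From mathcomp Require Import ring.
Set Implicit Arguments. Unset Strict Implicit. Unset Printing Implicit Defensive.
Import GRing.Theory.

(* Evaluation at the roots identifies Abar with K^6.  Fix e with e^2 = delta
   at the roots: any eps with eps^2 = delta is e twisted by a sign pattern
   S of roots, so the lines of Lambda are the lines L_S (S up to complement),
   and multiplying by mu_I turns L_S into L_(S Δ I); hence L_S and L_T have
   the same parity iff #(S Δ T) is even.  If two affine functions agree up to
   sign at the roots and each sign occurs at least twice, both vanish (char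
   <> 2); so L_S and L_T meet iff S Δ T or its complement has at most one
   element.  Taking L = L_∅, a line of the same parity is L_{a,b}; the lines
   of the other parity meeting both are L_{a} and L_{b}, and
   {L_∅, L_{a,b}, L_{a}, L_{b}} is the orbit of L under Phi_{ab}. *)

Section SymmetricDifference.
Variable T : finType.
Implicit Types A B : {set T}.

Definition symdiff A B := [set x | (x \in A) (+) (x \in B)].

Lemma in_symdiff x A B : (x \in symdiff A B) = (x \in A) (+) (x \in B).
Proof. by rewrite inE. Qed.

Lemma symdiff0S A : symdiff set0 A = A.
Proof. by apply/setP=> x; rewrite in_symdiff inE. Qed.

Lemma symdiffK A B : symdiff A (symdiff A B) = B.
Proof. by apply/setP=> x; rewrite !in_symdiff addbA addbb. Qed.

Lemma symdiffSC A B : symdiff A (~: B) = ~: symdiff A B.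
Proof. by apply/setP=> x; rewrite !inE addbN. Qed.

End SymmetricDifference.

Definition balanced (T : finType) (A : {set T}) := (1 < #|A|) && (1 < #|~: A|).

Section SixPoints.
Variables (T : finType) (card_T : #|T| = 6).
Implicit Types A : {set T}.

Lemma cardsC6 A : #|~: A| = 6 - #|A|.
Proof. by rewrite -card_T -(cardsC A) addKn. Qed.

Lemma card_le6 A : #|A| <= 6.
Proof. by rewrite -card_T -cardsT subset_leq_card ?subsetT. Qed.

Lemma even_set_pair A : ~~ odd #|A| -> A != set0 -> A != setT ->
  exists a b, a != b /\ (A = [set a; b] \/ A = ~: [set a; b]).
Proof.
move=> evenA nA0 nAT.
have nCA0 : ~: A != set0 by apply: contraNneq nAT => CA0; rewrite -[A]setCK CA0 setC0.
have : (#|A| == 2) || (#|~: A| == 2).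
  move: evenA nA0 nCA0 (card_le6 A); rewrite -!cards_eq0 cardsC6.
  by case: #|A| => [|[|[|[|[|[|[|k]]]]]]].
case/orP=> /cards2P [a [b [ab E]]]; exists a, b; split=> //; [left | right] => //.
by rewrite -E setCK.
Qed.

Lemma balanced_pair (a b : T) : a != b -> balanced [set a; b].
Proof. by move=> ab; rewrite /balanced cardsC6 cards2 ab. Qed.

Lemma odd_unbalanced_single A : odd #|A| -> ~~ balanced A ->
  exists c, A = [set c] \/ A = ~: [set c].
Proof.
move=> oddA; rewrite /balanced cardsC6 => unbA.
have : (#|A| == 1) || (#|~: A| == 1).
  move: oddA unbA (card_le6 A); rewrite cardsC6.
  by case: #|A| => [|[|[|[|[|[|[|k]]]]]]].
case/orP=> /cards1P [c E]; exists c; [left | right] => //.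
by rewrite -E setCK.
Qed.

Lemma balanced_triple (a b c : T) : a != b -> c \notin [set a; b] ->
  balanced (symdiff [set a; b] [set c]).
Proof.
move=> ab cab.
have -> : symdiff [set a; b] [set c] = c |: [set a; b].
  apply/setP=> x; rewrite in_symdiff !inE.
  by have [->|_] := eqVneq x c; [move: cab; rewrite !inE => /negPf -> | rewrite addbF].
by rewrite /balanced cardsC6 cardsU1 cab cards2 ab.
Qed.
End SixPoints.

Local Open Scope ring_scope.

Section SameLine.
Variables (K : fieldType) (F : {poly K}).
Implicit Types L N : {poly K} -> Prop.

Lemma same_lineR L : same_line L L.
Proof. by []. Qed.

Lemma same_line_sym L N : same_line L N -> same_line N L.
Proof. by move=> LN v; rewrite LN. Qed.

Lemma intersect_same_line L1 L2 N1 N2 : same_line L1 N1 -> same_line L2 N2 ->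
  intersect F L1 L2 -> intersect F N1 N2.
Proof. by move=> H1 H2 [v [nFv [/H1 ? /H2 ?]]]; exists v. Qed.

Lemma mul_line_same_line m L N : same_line L N ->
  same_line (mul_line F m L) (mul_line F m N).
Proof. by move=> LN w; split=> -[v [/LN ? ?]]; exists v. Qed.

Lemma same_parity_same_line L1 L2 N1 N2 : same_line L1 N1 -> same_line L2 N2 ->
  same_parity F L1 L2 -> same_parity F N1 N2.
Proof.
move=> H1 H2 [I [m [? ? ? ? HL]]]; exists I, m; split=> // v.
by rewrite -(mul_line_same_line m H1 v) HL H2.
Qed.

Lemma in_orbit_Phi_same_line omega psi L L' N : same_line L L' ->
  in_orbit_Phi F omega psi L N -> in_orbit_Phi F omega psi L' N.
Proof.
move=> LL' [x [y [mo [mp [? ? HN]]]]]; exists x, y, mo, mp; split=> // v.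
by rewrite -(mul_line_same_line _ LL' v) HN.
Qed.

End SameLine.

Lemma separable_roots (K : closedFieldType) (F : {poly K}) n :
  separable_poly F -> size F = n.+1 ->
  exists r : 'I_n -> K, [/\ injective r,
    forall g, F %| g <-> (forall i, g.[r i] = 0) &
    forall x, root F x -> exists i, x = r i].
Proof.
move=> sepF sizeF; have [rs Frs] := closed_field_poly_normal F.
have lcF : lead_coef F != 0 by rewrite lead_coef_eq0 -size_poly_eq0 sizeF.
have size_rs : size rs = n.
  by move: sizeF; rewrite Frs size_scale // size_prod_XsubC => -[].
have uniq_rs : uniq rs.
  by rewrite -separable_prod_XsubC -(eqp_separable (eqp_scale _ lcF)) -Frs.
have dvdF g : (F %| g) = all (root g) rs.
  rewrite Frs dvdpZl //; apply/idP/allP => [Fg x xrs | rs_g].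
    by apply: root_dvdp Fg _; rewrite root_prod_XsubC.
  by apply: uniq_roots_dvdp; [apply/allP | rewrite uniq_rootsE].
exists (fun i => rs`_i); split.
- by move=> i j /eqP; rewrite nth_uniq ?size_rs // => /eqP /val_inj.
- move=> g; rewrite dvdF; split=> [/allP rs_g i | rs_g].
    by apply/eqP/rs_g/mem_nth; rewrite size_rs.
  apply/allP => _ /(nthP 0) [i ir <-]; rewrite size_rs in ir.
  exact/eqP/(rs_g (Ordinal ir)).
- move=> x; rewrite Frs rootZ // root_prod_XsubC => xrs.
  have ix : (index x rs < n)%N by rewrite -size_rs index_mem.
  by exists (Ordinal ix); rewrite /= nth_index.
Qed.

Section SignedLines.
Variables (K : fieldType) (n : nat) (F : {poly K}) (r : 'I_n -> K).
Hypotheses (r_inj : injective r) (two_neq0 : 2 != 0 :> K).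
Hypothesis dvdF : forall g, F %| g <-> forall i, g.[r i] = 0.
Hypothesis root_F : forall x, root F x -> exists i, x = r i.

Lemma root_r i : root F (r i).
Proof. exact/eqP/(dvdF F).1/dvdpp. Qed.

Lemma interpolation (g : 'I_n -> K) : exists v : {poly K}, forall i, v.[r i] = g i.
Proof.
pose l i := \prod_(j | j != i) ('X - (r j)%:P).
have lE i k : (l i).[r k] = \prod_(j | j != i) (r k - r j).
  by rewrite horner_prod; apply: eq_bigr => j _; rewrite hornerXsubC.
exists (\sum_i (g i / (l i).[r i]) *: l i) => k.
rewrite horner_sum (bigD1 k) //= big1 ?addr0 => [|i neq_ik]; rewrite hornerZ.
  rewrite divfK // lE; apply/prodf_neq0 => j neq_jk.
  by rewrite subr_eq0 (inj_eq r_inj) eq_sym.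
by rewrite (lE i k) (bigD1 k) 1?eq_sym //= subrr mul0r mulr0.
Qed.

Lemma sign_inj (a b : bool) : (-1) ^+ a = (-1) ^+ b :> K -> a = b.
Proof.
have m1 : (-1 : K) != 1.
  have two : 2 = 1 - (-1) :> K by ring.
  by apply: contraNneq two_neq0 => m1; rewrite two m1 subrr.
by case: a; case: b => // /eqP; rewrite ?expr1 ?expr0 ?(negPf m1) // eq_sym (negPf m1).
Qed.

Definition affine (w : 'I_n -> K) := exists s t, forall i, w i = s * r i + t.

Lemma eq_affine w w' : w =1 w' -> affine w -> affine w'.
Proof. by move=> ww' [s [t E]]; exists s, t => i; rewrite -E ww'. Qed.

Lemma affineN w : affine w -> affine (fun i => - w i).
Proof. by case=> s [t E]; exists (- s), (- t) => i; rewrite E; ring. Qed.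

Lemma affine_eq2 w w' i j : affine w -> affine w' -> i != j ->
  w i = w' i -> w j = w' j -> w =1 w'.
Proof.
move=> [s [t E]] [s' [t' E']] ij; rewrite !E !E' => ei ej.
have : (s - s') * (r i - r j) = 0.
  transitivity ((s * r i + t - (s' * r i + t')) - (s * r j + t - (s' * r j + t'))).
    by ring.
  by rewrite ei ej !subrr.
move/eqP; rewrite mulf_eq0 !subr_eq0 (inj_eq r_inj) (negPf ij) orbF => /eqP ss'.
by move: ei; rewrite ss' => /addrI tt' k; rewrite E E' ss' tt'.
Qed.

Lemma affine_sign_const (d : 'I_n -> bool) : (2 < n)%N ->
  affine (fun i => (-1) ^+ d i) -> exists b, forall i, d i = b.
Proof.
move=> n_gt2 aff_d.
have : ~~ injectiveb d.
  by apply/injectiveP => /leq_card; rewrite card_ord card_bool leqNgt n_gt2.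
case/injectivePn=> i [j ij dij]; exists (d i) => k; apply: sign_inj.
have aff_cst : affine (fun=> (-1) ^+ d i) by exists 0, ((-1) ^+ d i) => l; rewrite mul0r add0r.
by apply: (affine_eq2 aff_d aff_cst ij) => //; rewrite dij.
Qed.

Lemma line_ofE eps v : line_of F eps v <-> affine (fun i => eps.[r i] * v.[r i]).
Proof.
split=> -[s [t]] => [/dvdF E | E]; exists s, t.
  by move=> i; apply/eqP; rewrite -subr_eq0; move: (E i); rewrite !hornerE => ->.
by apply/dvdF => i; rewrite !hornerE E subrr.
Qed.

Lemma card_root_set I : uniq I -> all (root F) I -> #|[set i | r i \in I]| = size I.
Proof.
move=> uI /allP rootI; rewrite -(size_image r); apply/perm_size/uniq_perm => // [|x].
  by rewrite map_inj_uniq ?enum_uniq.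
apply/imageP/idP => [[i] | xI]; first by rewrite inE => ? ->.
by have [i xi] := root_F (rootI x xI); exists i; rewrite // inE -xi.
Qed.

Lemma is_muE I m i : is_mu F I m -> m.[r i] = (-1) ^+ (r i \in I).
Proof. by move/(_ _ (root_r i)) ->; case: (r i \in I). Qed.

Lemma mu_single_exists omega : root F omega -> exists m, is_mu F [:: omega] m.
Proof.
move=> /root_F [a ->]; have [m Em] := interpolation (fun i => (-1) ^+ (i == a)).
by exists m => _ /root_F [i ->]; rewrite Em inE (inj_eq r_inj); case: (i == a).
Qed.

Lemma horner_mu_pair a b ma mb x y : is_mu F [:: r a] ma -> is_mu F [:: r b] mb ->
  forall i, (ma ^+ x * mb ^+ y).[r i] =
  (-1) ^+ (i \in [set j | ((j == a) && odd x) (+) ((j == b) && odd y)]).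
Proof.
move=> mu_a mu_b i; rewrite hornerM !horner_exp (is_muE _ mu_a) (is_muE _ mu_b).
rewrite !inE !(inj_eq r_inj).
have signX (c : bool) k : ((-1) ^+ c) ^+ k = (-1) ^+ (c && odd k) :> K.
  by rewrite -exprM -signr_odd oddM oddb.
by rewrite !signX signr_addb.
Qed.

Section Signs.
Variable e : 'I_n -> K.
Hypothesis e_neq0 : forall i, e i != 0.
Implicit Types (S T J : {set 'I_n}) (a b c : 'I_n).

(* The line L_eps of the paper for eps(r i) = (-1)^(i \in S) * e i. *)
Definition signed_line (S : {set 'I_n}) : {poly K} -> Prop :=
  fun v => affine (fun i => (-1) ^+ (i \in S) * (e i * v.[r i])).

Lemma signed_lineC S : same_line (signed_line (~: S)) (signed_line S).
Proof.
move=> v; have E i : (-1) ^+ (i \in ~: S) * (e i * v.[r i]) =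
                     - ((-1) ^+ (i \in S) * (e i * v.[r i])).
  by rewrite inE signrN mulNr.
by split=> /affineN; apply: eq_affine => i /=; rewrite E ?opprK.
Qed.

Lemma signed_line_eqP S T : (2 < n)%N ->
  same_line (signed_line S) (signed_line T) <-> T = S \/ T = ~: S.
Proof.
move=> n_gt2; split=> [ST | [-> | ->] v //]; last by rewrite signed_lineC.
(* A point of L_S whose affine function is the constant 1. *)
have [v Ev] := interpolation (fun i => (e i)^-1 * (-1) ^+ (i \in S)).
have Ev' i : e i * v.[r i] = (-1) ^+ (i \in S) by rewrite Ev mulVKf.
have vS : signed_line S v by exists 0, 1 => i; rewrite Ev' mul0r add0r -expr2 sqrr_sign.
have /affine_sign_const [//|c Ec] : affine (fun i => (-1) ^+ ((i \in S) (+) (i \in T))).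
  by apply: eq_affine ((ST v).1 vS) => i; rewrite Ev' signr_addb mulrC.
by case: c Ec => Ec; [right | left]; apply/setP => i; move: (Ec i); rewrite ?inE;
  case: (i \in S); case: (i \in T).
Qed.

Lemma mul_signed_line S m J : (forall i, m.[r i] = (-1) ^+ (i \in J)) ->
  same_line (mul_line F m (signed_line S)) (signed_line (symdiff S J)).
Proof.
move=> Em w; split=> [[v [vS /dvdF Ew]] | wSJ].
  apply: eq_affine vS => i; move/eqP: (Ew i); rewrite hornerD hornerN hornerM Em subr_eq0.
  by move=> /eqP ->; rewrite in_symdiff; case: (i \in S); case: (i \in J) => /=; ring.
exists (m * w); split.
  apply: eq_affine wSJ => i; rewrite hornerM Em in_symdiff.
  by case: (i \in S); case: (i \in J) => /=; ring.
by apply/dvdF => i; rewrite hornerD hornerN !hornerM Em; case: (i \in J) => /=; ring.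
Qed.

Lemma signed_line_disjoint S T : balanced (symdiff S T) ->
  ~ intersect F (signed_line S) (signed_line T).
Proof.
case/andP=> /card_gt1P [i [j [iD jD ij]]] /card_gt1P [i' [j' [iD' jD' ij']]].
case=> v [/negP nFv [vS vT]]; apply/nFv/dvdF => k.
have ET l : (-1) ^+ (l \in T) * (e l * v.[r l]) =
            (-1) ^+ (l \in symdiff S T) * ((-1) ^+ (l \in S) * (e l * v.[r l])).
  by rewrite mulrA -signr_addb in_symdiff; case: (l \in S); case: (l \in T).
rewrite !in_setC in iD' jD'.
have Eout l : l \notin symdiff S T -> (-1) ^+ (l \in T) * (e l * v.[r l]) =
                                      (-1) ^+ (l \in S) * (e l * v.[r l]).
  by move=> lD; rewrite ET mulr_sign (negPf lD).
have Ein l : l \in symdiff S T -> (-1) ^+ (l \in T) * (e l * v.[r l]) =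
                                   - ((-1) ^+ (l \in S) * (e l * v.[r l])).
  by move=> lD; rewrite ET mulr_sign lD.
have same := affine_eq2 vT vS ij' (Eout _ iD') (Eout _ jD').
have opp := affine_eq2 vT (affineN vS) ij (Ein _ iD) (Ein _ jD).
have := opp k; rewrite same => /eqP; rewrite -addr_eq0 -mulr2n -mulr_natl !mulf_eq0.
by rewrite (negPf two_neq0) signr_eq0 (negPf (e_neq0 k)) => /eqP.
Qed.

Lemma signed_line_meet S T c : (1 < n)%N ->
  (forall i, i != c -> (i \in S) = (i \in T)) ->
  intersect F (signed_line S) (signed_line T).
Proof.
move=> n_gt1 ST.
have /card_gt0P [d] : (0 < #|[set~ c]|)%N by rewrite cardsC1 card_ord -subn1 subn_gt0.
rewrite !inE => dc.
have [v Ev] := interpolation (fun i => (e i)^-1 * ((-1) ^+ (i \in S) * (r i - r c))).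
have Ev' i : e i * v.[r i] = (-1) ^+ (i \in S) * (r i - r c) by rewrite Ev mulVKf.
exists v; split; [|split; exists 1, (- r c) => i; rewrite Ev' ?signrMK ?mul1r //].
  apply/negP => /dvdF /(_ d) /eqP; rewrite Ev !mulf_eq0 invr_eq0 signr_eq0.
  by rewrite (negPf (e_neq0 d)) subr_eq0 (inj_eq r_inj) (negPf dc).
have [-> | ic] := eqVneq i c; first by rewrite !subrr !mulr0.
by rewrite -(ST i ic) signrMK.
Qed.

Lemma same_parity_signed_line S T : ~~ odd n -> (2 < n)%N ->
  same_parity F (signed_line S) (signed_line T) <-> ~~ odd #|symdiff S T|.
Proof.
move=> n_even n_gt2; split=> [[I [m [uI rootI evenI mu_m HT]]] | evenST].
  set J := [set i | r i \in I].
  have Em i : m.[r i] = (-1) ^+ (i \in J) by rewrite (is_muE _ mu_m) inE.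
  have JT : same_line (signed_line (symdiff S J)) (signed_line T).
    by move=> v; rewrite -(mul_signed_line S Em v) HT.
  have := cardsC J; rewrite card_ord card_root_set // => cardJ.
  by case/signed_line_eqP: JT => // ->; rewrite ?symdiffSC symdiffK ?card_root_set //;
    move: n_even; rewrite -[X in odd X]cardJ oddD (negPf evenI).
pose Is := [seq r i | i in symdiff S T].
have [m Em] := interpolation (fun i => (-1) ^+ (i \in symdiff S T)).
exists Is, m; split.
- by rewrite map_inj_uniq ?enum_uniq.
- by apply/allP => _ /imageP [i _ ->]; exact: root_r.
- by rewrite size_image.
- by move=> _ /root_F [i ->]; rewrite Em mem_image //; case: (i \in _).
- by move=> v; rewrite (mul_signed_line S Em v) symdiffK.
Qed.

Lemma in_orbit_Phi_signed_line a b S N :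
  in_orbit_Phi F (r a) (r b) (signed_line S) N <->
  exists x y : bool, same_line N
    (signed_line (symdiff S [set i | ((i == a) && x) (+) ((i == b) && y)])).
Proof.
split=> [[x [y [ma [mb [mu_a mu_b HN]]]]] | [x [y HN]]].
  exists (odd x), (odd y) => v.
  by rewrite -(HN v) (mul_signed_line S (horner_mu_pair x y mu_a mu_b) v).
have [ma mu_a] := mu_single_exists (root_r a).
have [mb mu_b] := mu_single_exists (root_r b).
exists x, y, ma, mb; split=> // v.
by rewrite (mul_signed_line S (horner_mu_pair x y mu_a mu_b) v) !oddb HN.
Qed.

Section Lambda.
Variable delta : {poly K}.
Hypothesis e_sq : forall i, e i ^+ 2 = delta.[r i].

Lemma inLambda_signed_line N :
  inLambda F delta N <-> exists S, same_line N (signed_line S).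
Proof.
split=> [[eps [/dvdF Eeps HN]] | [S HN]].
  exists [set i | eps.[r i] != e i] => v; rewrite HN line_ofE.
  have Es i : eps.[r i] = (-1) ^+ (i \in [set i | eps.[r i] != e i]) * e i.
    have : eps.[r i] ^+ 2 == e i ^+ 2.
      by move: (Eeps i); rewrite hornerD hornerN horner_exp e_sq => /eqP; rewrite subr_eq0.
    rewrite eqf_sqr inE mulr_sign.
    by have [-> | _ /= /eqP ->] := eqVneq eps.[r i] (e i).
  by split; apply: eq_affine => i; rewrite Es mulrA.
have [eps Eeps] := interpolation (fun i => (-1) ^+ (i \in S) * e i).
exists eps; split.
  by apply/dvdF => i; rewrite hornerD hornerN horner_exp Eeps exprMn sqrr_sign mul1r e_sq subrr.
by move=> v; rewrite HN line_ofE; split; apply: eq_affine => i; rewrite Eeps mulrA.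
Qed.

Section Six.
Hypothesis n6 : n = 6%N.

Let card6 : #|'I_n| = 6%N. Proof. by rewrite card_ord. Qed.
Let n_even : ~~ odd n. Proof. by rewrite n6. Qed.
Let n_gt2 : (2 < n)%N. Proof. by rewrite n6. Qed.

Lemma same_parity_pair L L' : same_line L (signed_line set0) ->
  inLambda F delta L' -> ~ same_line L L' -> same_parity F L L' ->
  exists a b, a != b /\ same_line L' (signed_line [set a; b]).
Proof.
move=> HL /inLambda_signed_line [T HT] LL' par.
have evenT : ~~ odd #|T|.
  rewrite -(symdiff0S T); apply/(same_parity_signed_line _ _ n_even n_gt2).
  exact: same_parity_same_line HL HT par.
have {}LL' : ~ (T = set0 \/ T = ~: set0).
  move/(signed_line_eqP set0 T n_gt2) => s0T; apply: LL' => v; rewrite HL HT; exact: s0T.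
have T_neq0 : T != set0 by apply/eqP => T0; apply: LL'; left.
have T_neqT : T != setT by apply/eqP => TT; apply: LL'; right; rewrite setC0.
have [a [b [ab TE]]] := even_set_pair card6 evenT T_neq0 T_neqT.
by exists a, b; split=> //; case: TE => TE v; rewrite HT TE ?signed_lineC.
Qed.

Section Hexagon.
Variables (L L' : {poly K} -> Prop) (a b : 'I_n).
Hypotheses (ab : a != b) (HL : same_line L (signed_line set0))
  (HL' : same_line L' (signed_line [set a; b])).

Lemma hexagon_disjoint : ~ intersect F L L'.
Proof.
move/(intersect_same_line HL HL'); apply: signed_line_disjoint.
by rewrite symdiff0S balanced_pair.
Qed.

Lemma transversals_meet :
  [/\ intersect F L (signed_line [set a]), intersect F L' (signed_line [set a]),
      intersect F L (signed_line [set b]) & intersect F L' (signed_line [set b])].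
Proof.
have meet S T c : (forall i, i != c -> (i \in S) = (i \in T)) ->
    intersect F (signed_line S) (signed_line T).
  by apply: signed_line_meet; rewrite n6.
split; [apply: intersect_same_line (same_line_sym HL) (same_lineR _) (meet _ _ a _) |
        apply: intersect_same_line (same_line_sym HL') (same_lineR _) (meet _ _ b _) |
        apply: intersect_same_line (same_line_sym HL) (same_lineR _) (meet _ _ b _) |
        apply: intersect_same_line (same_line_sym HL') (same_lineR _) (meet _ _ a _)] => i;
  rewrite !inE => /negPf ->; rewrite ?orbF //.
Qed.

Lemma transversals_opp_parity :
  opp_parity F L (signed_line [set a]) /\ opp_parity F L (signed_line [set b]).
Proof.
by split=> /(same_parity_same_line HL (same_lineR _))
  /(same_parity_signed_line _ _ n_even n_gt2); rewrite symdiff0S cards1.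
Qed.

Lemma transversals_neq : ~ same_line (signed_line [set a]) (signed_line [set b]).
Proof.
case/(signed_line_eqP _ _ n_gt2) => [/setP/(_ b) | Eb].
  by rewrite !inE eqxx eq_sym (negPf ab).
by have := cards1 b; rewrite Eb (cardsC6 card6) cards1.
Qed.

Lemma transversals_unique N : inLambda F delta N -> opp_parity F L N ->
  intersect F L N -> intersect F L' N ->
  same_line N (signed_line [set a]) \/ same_line N (signed_line [set b]).
Proof.
case/inLambda_signed_line => S HN oppN LN L'N.
have oddS : odd #|S|.
  apply/negPn/negP => evenS; apply: oppN.
  apply: same_parity_same_line (same_line_sym HL) (same_line_sym HN) _.
  by apply/(same_parity_signed_line _ _ n_even n_gt2); rewrite symdiff0S.
have unbS : ~~ balanced S.
  apply/negP => balS; apply: (@signed_line_disjoint set0 S); first by rewrite symdiff0S.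
  exact: intersect_same_line HL HN LN.
have [c Sc] := odd_unbalanced_single card6 oddS unbS.
have Nc : same_line N (signed_line [set c]).
  by case: Sc => Sc v; rewrite HN Sc ?signed_lineC.
have : c \in [set a; b].
  apply/negPn/negP => cab; apply: (signed_line_disjoint (balanced_triple card6 ab cab)).
  exact: intersect_same_line HL' Nc L'N.
by rewrite !inE => /orP [] /eqP c_ab; [left | right]; rewrite -c_ab.
Qed.

Lemma orbit_Phi N : in_orbit_Phi F (r a) (r b) L N <->
  same_line N L \/ same_line N L' \/ same_line N (signed_line [set a]) \/
  same_line N (signed_line [set b]).
Proof.
have orbit_set (x y : bool) : [set i | ((i == a) && x) (+) ((i == b) && y)] =
    if x then if y then [set a; b] else [set a] else if y then [set b] else set0.
  apply/setP => i; case: x; case: y; rewrite !inE ?andbT ?andbF ?addbF //.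
  by have [-> | _] := eqVneq i a; rewrite ?(negPf ab).
split=> [/(in_orbit_Phi_same_line HL) /in_orbit_Phi_signed_line [x [y]] | NLL'].
  rewrite symdiff0S orbit_set.
  by case: x; case: y => HN; [right; left | do 2 right; left | do 3 right | left] => v;
    rewrite HN ?HL ?HL'.
apply/(in_orbit_Phi_same_line (same_line_sym HL))/in_orbit_Phi_signed_line.
case: NLL' => [NL | [NL' | [Na | Nb]]];
  [exists false, false | exists true, true | exists true, false | exists false, true];
  by rewrite symdiff0S orbit_set => v; rewrite ?NL ?NL' ?Na ?Nb ?HL ?HL'.
Qed.

Lemma hexagon : ~ intersect F L L' /\
  exists M M' : {poly K} -> Prop,
    [/\ inLambda F delta M /\ inLambda F delta M',
        ~ same_line M M',
        (opp_parity F L M /\ opp_parity F L M') /\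
        [/\ intersect F L M, intersect F L' M, intersect F L M' & intersect F L' M'],
        (forall N, inLambda F delta N -> opp_parity F L N ->
           intersect F L N -> intersect F L' N -> same_line N M \/ same_line N M') &
        exists omega psi : K,
          [/\ root F omega, root F psi &
              forall N, in_orbit_Phi F omega psi L N <->
                (same_line N L \/ same_line N L' \/ same_line N M \/ same_line N M')]].
Proof.
split; first exact: hexagon_disjoint.
exists (signed_line [set a]), (signed_line [set b]); split.
- by split; apply/inLambda_signed_line; eexists; apply: same_lineR.
- exact: transversals_neq.
- split; [exact: transversals_opp_parity | exact: transversals_meet].
- exact: transversals_unique.
- by exists (r a), (r b); split; [exact: root_r | exact: root_r | exact: orbit_Phi].
Qed.

End Hexagon.
End Six.
End Lambda.
End Signs.
End SignedLines.

Theorem lemma2p15 (k : fieldType) (K : closedFieldType)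
  (iota : {rmorphism k -> K}) (f : {poly k}) (delta : {poly K})
  (L L' : {poly K} -> Prop) :
  ~~ (2%N \in [pchar k]) ->
  separable_poly f -> size f = 7%N ->
  coprimep delta (map_poly iota f) ->
  inLambda (map_poly iota f) delta L ->
  inLambda (map_poly iota f) delta L' ->
  ~ same_line L L' ->
  same_parity (map_poly iota f) L L' ->
  ~ intersect (map_poly iota f) L L' /\
  exists M M' : {poly K} -> Prop,
    [/\ inLambda (map_poly iota f) delta M /\ inLambda (map_poly iota f) delta M',
        ~ same_line M M',
        (opp_parity (map_poly iota f) L M /\ opp_parity (map_poly iota f) L M') /\
        [/\ intersect (map_poly iota f) L M, intersect (map_poly iota f) L' M,
            intersect (map_poly iota f) L M' & intersect (map_poly iota f) L' M'],
        (forall N, inLambda (map_poly iota f) delta N ->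
           opp_parity (map_poly iota f) L N ->
           intersect (map_poly iota f) L N -> intersect (map_poly iota f) L' N ->
           same_line N M \/ same_line N M') &
        exists omega psi : K,
          [/\ root (map_poly iota f) omega, root (map_poly iota f) psi &
              forall N, in_orbit_Phi (map_poly iota f) omega psi L N <->
                (same_line N L \/ same_line N L' \/ same_line N M \/ same_line N M')]].
Proof.
move=> char_k sep_f size_f cop [eps [eps_sq HL]] LamL' LL' par.
set F := map_poly iota f in cop eps_sq HL LamL' par *.
have [r [r_inj dvdF root_F]] : exists r : 'I_6 -> K, [/\ injective r,
    forall g, F %| g <-> (forall i, g.[r i] = 0) & forall x, root F x -> exists i, x = r i].
  by apply: separable_roots; rewrite ?separable_map ?size_map_poly.
have two_neq0 : 2 != 0 :> K.
  by rewrite -(rmorph_nat iota) fmorph_eq0; apply: contraNneq char_k => two0; rewrite inE /= two0.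
pose e i := eps.[r i].
have e_sq i : e i ^+ 2 = delta.[r i].
  by move/dvdF: eps_sq => /(_ i) /eqP; rewrite hornerD hornerN horner_exp subr_eq0 => /eqP.
have e_neq0 i : e i != 0.
  rewrite coprimep_sym in cop; apply: contraNneq (coprimep_root cop (root_r dvdF i)).
  by rewrite -e_sq => ->; rewrite expr2 mul0r.
have HL0 : same_line L (signed_line r e set0).
  move=> v; rewrite HL (line_ofE dvdF) /signed_line.
  by split; apply: eq_affine => i; rewrite inE /= mul1r.
have [a [b [ab HL']]] := same_parity_pair r_inj two_neq0 dvdF root_F e_neq0 e_sq
  (erefl 6%N) HL0 LamL' LL' par.
exact (hexagon r_inj two_neq0 dvdF root_F e_neq0 e_sq (erefl 6%N) ab HL0 HL').
Qed.
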